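(* $\operatorname{Spec}(32_{65})\subseteq\{11,12,13,\dots\}\cup\{\omega\}$.
   Context: $32_{65}$ is the finite integral symmetric relation algebra with atoms $1'$, $a$, $b$, $c$, all symmetric, in which a diversity cycle $xyz$ (with $x,y,z\in\{a,b,c\}$) is mandatory (i.e. $x;y\ge z$) if it involves $a$ and forbidden (i.e. $x;y\cdot z=0$) otherwise. A representation over a set $U$ is an embedding into the full relation algebra $\langle\mathcal P(U\times U),\cup,{}^c,\circ,{}^{-1},\mathrm{Id}_U\rangle$. $\operatorname{Spec}(A)$ is the set of cardinals $\alpha\le\omega$ such that $A$ has a representation over a set of cardinality $\alpha$. *)

From mathcomp Require Import all_boot.
Set Implicit Arguments. Unset Strict Implicit. Unset Printing Implicit Defensive.

(* Atoms of 32_65, encoded as 'I_4:  0 = 1' (identity), 1 = a, 2 = b, 3 = c. *)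
Definition atom := 'I_4.
Definition is_id (x : atom) : bool := val x == 0.
Definition is_a (x : atom) : bool := val x == 1.

Definition RA := {set atom}.

(* Product of two atoms.  1' is the identity; all atoms are symmetric, so
   x;y >= 1' iff x = y; a diversity cycle xyz is mandatory (z <= x;y)
   iff it involves a, and forbidden otherwise. *)
Definition atom_comp (x y : atom) : RA :=
  if is_id x then [set y]
  else if is_id y then [set x]
  else [set z | if is_id z then x == y else [|| is_a x, is_a y | is_a z]].

Definition ra_join (X Y : RA) : RA := X :|: Y.
Definition ra_compl (X : RA) : RA := ~: X.
Definition ra_comp (X Y : RA) : RA :=
  \bigcup_(x in X) \bigcup_(y in Y) atom_comp x y.
Definition atom_conv (x : atom) : atom := x.
Definition ra_conv (X : RA) : RA := [set atom_conv x | x in X].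
Definition ra_id : RA := [set (@ord0 3)].

Definition frel (U : finType) := {set U * U}.
Definition rel_comp (U : finType) (R S : frel U) : frel U :=
  [set p | [exists z, ((p.1, z) \in R) && ((z, p.2) \in S)]].
Definition rel_conv (U : finType) (R : frel U) : frel U :=
  [set p | (p.2, p.1) \in R].
Definition rel_id (U : finType) : frel U := [set p | p.1 == p.2].

Definition is_representation (U : finType) (h : RA -> frel U) : Prop :=
  injective h /\
  (forall X Y, h (ra_join X Y) = h X :|: h Y) /\
  (forall X, h (ra_compl X) = ~: h X) /\
  (forall X Y, h (ra_comp X Y) = rel_comp (h X) (h Y)) /\
  (forall X, h (ra_conv X) = rel_conv (h X)) /\
  h ra_id = rel_id U.

Definition has_representation_over (U : finType) : Prop :=
  exists h : RA -> frel U, is_representation h.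

From Pilot Require Import Defs.
From mathcomp Require Import all_boot.
Set Implicit Arguments. Unset Strict Implicit. Unset Printing Implicit Defensive.

(* A representation of 32_65 over U labels every pair (u, v) with the unique
   atom whose image contains it; composition turns the mandatory and forbidden
   cycles into constraints on the labels.  Take x, y with label b.  As a;a >= b
   there is z with zx = zy = a.  As b;b, b;c, c;b, c;c >= a, the pair (z, x)
   has four witnesses w with (zw, wx) ranging over {b, c}^2, and likewise for
   (z, y).  No w serves both x and y, since wx, xy = b and wy would form a
   forbidden cycle on {b, c}; together with x, y, z this gives 11 points. *)

Definition id_atom : atom := ord0.
Definition a_atom : atom := @Ordinal 4 1 isT.
Definition b_atom : atom := @Ordinal 4 2 isT.
Definition c_atom : atom := @Ordinal 4 3 isT.

Definition bc_atoms : {set atom} := [set b_atom; c_atom].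

Lemma atom_compE (x y z : atom) :
  (z \in atom_comp x y) =
  if is_id x then z == y else if is_id y then z == x
  else if is_id z then x == y else [|| is_a x, is_a y | is_a z].
Proof. by rewrite /atom_comp; case: ifP => _; last case: ifP => _; rewrite inE. Qed.

Lemma id_in_atom_comp (x y : atom) : (id_atom \in atom_comp x y) = (x == y).
Proof.
by rewrite atom_compE; move: x y; do 2 case=> [[|[|[|[|?]]]] //= ?]; apply/eqP.
Qed.

Lemma b_in_atom_comp_aa : b_atom \in atom_comp a_atom a_atom.
Proof. by rewrite atom_compE. Qed.

Lemma a_in_atom_comp_bc (s t : atom) :
  s \in bc_atoms -> t \in bc_atoms -> a_atom \in atom_comp s t.
Proof. by rewrite !inE atom_compE => /orP[]/eqP-> /orP[]/eqP->. Qed.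

Lemma atom_comp_bc_notin (s t u : atom) :
  s \in bc_atoms -> t \in bc_atoms -> u \in atom_comp s t -> u \notin bc_atoms.
Proof.
rewrite !inE atom_compE => /orP[]/eqP-> /orP[]/eqP->;
  by case: u => [[|[|[|[|?]]]] ?].
Qed.

Section AtomLabelling.

Variables (U : finType) (lab : U -> U -> atom).
Hypothesis lab_idE : forall u v, (lab u v == id_atom) = (u == v).
Hypothesis lab_comp : forall u w v, lab u v \in atom_comp (lab u w) (lab w v).
Hypothesis lab_witness : forall u v s t,
  lab u v \in atom_comp s t -> exists2 w, lab u w = s & lab w v = t.

Lemma lab_diag u : lab u u = id_atom.
Proof. by apply/eqP; rewrite lab_idE. Qed.

Lemma lab_sym u v : lab u v = lab v u.
Proof. by apply/eqP; rewrite -id_in_atom_comp -(lab_diag u). Qed.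

Definition bc_paths (z x : U) : {set U} :=
  [set w | (lab z w \in bc_atoms) && (lab w x \in bc_atoms)].

Lemma in_bc_paths z x w :
  (w \in bc_paths z x) = (lab z w \in bc_atoms) && (lab w x \in bc_atoms).
Proof. exact: in_set. Qed.

Lemma card_bc_paths z x : lab z x = a_atom -> 4 <= #|bc_paths z x|.
Proof.
move=> zx.
have cover : setX bc_atoms bc_atoms \subset
             [set (lab z w, lab w x) | w in bc_paths z x].
  apply/subsetP => -[s t] /setXP[s_bc t_bc].
  have [|w zw wx] := @lab_witness z x s t; first by rewrite zx a_in_atom_comp_bc.
  apply/imsetP; exists w; last by rewrite zw wx.
  by rewrite in_bc_paths zw wx s_bc t_bc.
have := leq_trans (subset_leq_card cover) (leq_imset_card _ _).
by rewrite cardsX cards2.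
Qed.

Lemma bc_paths_disjoint x y z :
  lab x y = b_atom -> bc_paths z x :&: bc_paths z y = set0.
Proof.
move=> xy; apply/setP => w; rewrite in_setI in_set0 !in_bc_paths.
apply/negP => /andP[/andP[_ wx] /andP[_ wy]].
have xw : lab x w \in bc_atoms by rewrite lab_sym.
by move: (atom_comp_bc_notin xw wy (lab_comp x w y)); rewrite xy !inE eqxx.
Qed.

Lemma labelling_card x y : lab x y = b_atom -> 11 <= #|U|.
Proof.
move=> xy.
have [|z xz zy] := @lab_witness x y a_atom a_atom.
  by rewrite xy b_in_atom_comp_aa.
have zx : lab z x = a_atom by rewrite lab_sym.
have x_y : x != y by rewrite -lab_idE xy.
have x_z : x != z by rewrite -lab_idE xz.
have y_z : y != z by rewrite -lab_idE lab_sym zy.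
have xyz3 : #|x |: [set y; z]| = 3.
  by rewrite cardsU1 cards2 !inE negb_or x_y x_z y_z.
have xyz_out : (x |: [set y; z]) :&: (bc_paths z x :|: bc_paths z y) = set0.
  apply/setP => w; rewrite in_setI in_set0.
  case/boolP: (w \in _) => //= /setU1P[->|/set2P[->|->]];
    by rewrite in_setU !in_bc_paths !lab_diag ?zx ?zy !inE.
pose S := (x |: [set y; z]) :|: (bc_paths z x :|: bc_paths z y).
apply: leq_trans (max_card (mem S)).
rewrite cardsU xyz_out cards0 subn0 xyz3 cardsU (bc_paths_disjoint _ xy) cards0 subn0.
by rewrite -[11]/(3 + (4 + 4)) leq_add2l leq_add ?card_bc_paths.
Qed.

End AtomLabelling.

Section Representation.

Variables (U : finType) (h : RA -> Defs.frel U).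
Hypothesis h_inj : injective h.
Hypothesis h_join : forall X Y, h (ra_join X Y) = h X :|: h Y.
Hypothesis h_compl : forall X, h (ra_compl X) = ~: h X.
Hypothesis h_comp : forall X Y, h (ra_comp X Y) = rel_comp (h X) (h Y).
Hypothesis h_id : h ra_id = rel_id U.

Lemma h_mono (X Y : RA) : X \subset Y -> h X \subset h Y.
Proof. by move/setUidPr <-; rewrite h_join subsetUl. Qed.

Lemma h_setT : h setT = setT.
Proof.
by rewrite -(setUCr set0) (h_join set0 (~: set0)) -/(ra_compl set0) h_compl setUCr.
Qed.

Lemma h_set0 : h set0 = set0.
Proof. by rewrite -setCT -/(ra_compl setT) h_compl h_setT setCT. Qed.

Lemma h_bigcup_set1 (X : RA) : h X = \bigcup_(t in X) h [set t].
Proof.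
rewrite -(big_morph h h_join h_set0); congr h; apply/setP => t.
by apply/idP/bigcupP => [tX | [s sX /set1P ->//]]; exists t; rewrite ?inE.
Qed.

Definition lab (u v : U) : atom := odflt id_atom [pick t | (u, v) \in h [set t]].

Lemma lab_in u v : (u, v) \in h [set lab u v].
Proof.
rewrite /lab; case: pickP => [//|none].
by have := in_setT (u, v); rewrite -h_setT h_bigcup_set1 => /bigcupP[t _]; rewrite none.
Qed.

Lemma in_hE u v (X : RA) : ((u, v) \in h X) = (lab u v \in X).
Proof.
have [labX | labNX] := boolP (lab u v \in X).
  by apply: subsetP (lab_in u v); apply: h_mono; rewrite sub1set.
apply/negbTE; have : (u, v) \in h (ra_compl X).
  by apply: subsetP (lab_in u v); apply: h_mono; rewrite sub1set inE.
by rewrite h_compl inE.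
Qed.

Lemma ra_comp_set1 s t : ra_comp [set s] [set t] = atom_comp s t.
Proof. by rewrite /ra_comp !big_set1. Qed.

Lemma lab_in_atom_compE u v s t :
  (lab u v \in atom_comp s t) = [exists w, (lab u w == s) && (lab w v == t)].
Proof.
rewrite -in_hE -ra_comp_set1 h_comp inE; apply: eq_existsb => w.
by rewrite !in_hE !inE.
Qed.

Lemma lab_idE u v : (lab u v == id_atom) = (u == v).
Proof. by have := in_hE u v ra_id; rewrite h_id !inE => ->. Qed.

Lemma lab_comp u w v : lab u v \in atom_comp (lab u w) (lab w v).
Proof. by rewrite lab_in_atom_compE; apply/existsP; exists w; rewrite !eqxx. Qed.

Lemma lab_witness u v s t :
  lab u v \in atom_comp s t -> exists2 w, lab u w = s & lab w v = t.
Proof. by rewrite lab_in_atom_compE => /existsP[w /andP[/eqP uw /eqP wv]]; exists w. Qed.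

Lemma exists_lab_b : exists u v, lab u v = b_atom.
Proof.
have /set0Pn[[u v]] : h [set b_atom] != set0.
  by rewrite -h_set0; apply/eqP => /h_inj /setP /(_ b_atom); rewrite !inE.
by rewrite in_hE inE => /eqP; exists u, v.
Qed.

Lemma representation_card : 11 <= #|U|.
Proof.
have [x [y xy]] := exists_lab_b.
exact: (labelling_card lab_idE lab_comp lab_witness xy).
Qed.

End Representation.

Theorem mainTheorem4 (U : finType) :
  has_representation_over U -> 11 <= #|U|.
Proof.
case=> h [h_inj [h_join [h_compl [h_comp [_ h_id]]]]].
exact: (representation_card h_inj h_join h_compl h_comp h_id).
Qed.
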